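(* Let $r\ge2$, $a_1,\dots,a_r\in\mathbb{N}$ and $n_1,\dots,n_r\ge1$. In the sampling without replacement Pólya–Eggenberger urn with $r$ types of balls and ball transition matrix $\mathrm{diag}(-a_1,\dots,-a_r)$, started with $a_jn_j$ balls of type $j$, let $\mathbf{Y}_{\mathbf{an}}=(Y^{[1]}_{\mathbf{an}},\dots,Y^{[r-1]}_{\mathbf{an}})$ count the numbers of balls of types $1,\dots,r-1$ when the process stops. Then for $0\le k_j\le n_j$, \[ \mathbb{P}\{\mathbf{Y}_{\mathbf{an}}=(a_1k_1,\dots,a_{r-1}k_{r-1})\}=\sum_{\ell_1=k_1}^{n_1}\cdots\sum_{\ell_{r-1}=k_{r-1}}^{n_{r-1}}\frac{\prod_{j=1}^{r-1}\binom{n_j}{\ell_j}\binom{\ell_j}{k_j}(-1)^{\ell_j-k_j}}{\binom{n_r+\sum_{f=1}^{r-1}\frac{a_f\ell_f}{a_r}}{n_r}}, \] and for all integers $s_1,\dots,s_{r-1}\ge0$, \[ \mathbb{E}\Big(\prod_{j=1}^{r-1}\Big(\frac{Y^{[j]}_{\mathbf{an}}}{a_j}\Big)^{\underline{s_j}}\Big)=\frac{\prod_{j=1}^{r-1}n_j^{\underline{s_j}}}{\binom{n_r+\sum_{f=1}^{r-1}\frac{a_fs_f}{a_r}}{n_r}}. \]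
   Context: The urn: at each step a ball is drawn uniformly at random among all balls present; if it is of type $j$, the number of type $j$ balls decreases by $a_j$. The process stops when either all type $r$ balls have been removed or all balls of types $1,\dots,r-1$ have been removed; $Y^{[j]}_{\mathbf{an}}$ is the number of type $j$ balls at that time. For real $x$ and integer $k\ge0$, $x^{\underline{k}}=x(x-1)\cdots(x-k+1)$ and $\binom{x}{k}=x^{\underline{k}}/k!$. *)

From HB Require Import structures.
From mathcomp Require Import all_boot all_order all_algebra.
Set Implicit Arguments. Unset Strict Implicit. Unset Printing Implicit Defensive.
Import Order.TTheory GRing.Theory Num.Theory.
Local Open Scope ring_scope.

Definition falling {R : pzRingType} (x : R) (k : nat) : R :=
  \prod_(i < k) (x - i%:R).

Definition gbinom {R : fieldType} (x : R) (k : nat) : R :=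
  falling x k / (k`!)%:R.

(* Urn with r = q+1 types.  Types 1..r-1 are indexed by 'I_q, type r is
   separate.  A state is (x, z): x j = number of balls of type j (j < r),
   z = number of balls of type r.  a j (resp. ar) = number of balls removed
   when a ball of type j (resp. type r) is drawn. *)
Definition urn_stopped (q : nat) (x : {ffun 'I_q -> nat}) (z : nat) : bool :=
  (z == 0%N) || [forall j, x j == 0%N].

(* urn_expect a ar fuel x z f = E[ f(Y) ] where Y is the vector of the
   numbers of balls of types 1..r-1 when the process started from (x,z)
   stops; fuel bounds the number of steps (each step removes >= 1 ball when
   all a j, ar >= 1, so the total number of balls is enough fuel). *)
Fixpoint urn_expect {R : fieldType} (q : nat) (a : {ffun 'I_q -> nat}) (ar : nat)
    (fuel : nat) (x : {ffun 'I_q -> nat}) (z : nat)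
    (f : {ffun 'I_q -> nat} -> R) {struct fuel} : R :=
  if urn_stopped x z then f x else
  match fuel with
  | 0%N => 0
  | fuel'.+1 =>
      let tot : R := (\sum_(i < q) x i + z)%N%:R in
      \sum_(j < q) ((x j)%:R / tot) *
          urn_expect a ar fuel' [ffun i => if i == j then (x i - a i)%N else x i] z f
      + (z%:R / tot) * urn_expect a ar fuel' x (z - ar)%N f
  end.

Definition urn_E {R : fieldType} (q : nat) (a : {ffun 'I_q -> nat}) (ar : nat)
    (n : {ffun 'I_q -> nat}) (nr : nat) (f : {ffun 'I_q -> nat} -> R) : R :=
  urn_expect a ar (\sum_(j < q) a j * n j + ar * nr)%N
    [ffun j => (a j * n j)%N] (ar * nr)%N f.

Definition urn_P {R : fieldType} (q : nat) (a : {ffun 'I_q -> nat}) (ar : nat)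
    (n : {ffun 'I_q -> nat}) (nr : nat) (y : {ffun 'I_q -> nat}) : R :=
  urn_E a ar n nr (fun x => (x == y)%:R).

From HB Require Import structures.
From mathcomp Require Import all_boot all_order all_algebra.
From mathcomp Require Import ring zify.
Import Order.TTheory GRing.Theory Num.Theory.
Local Open Scope ring_scope.

(* Measure the urn in units: m_j units of type j stand for a_j m_j balls,
   mr units of type r for a_r mr balls.  E f(Y) is the unique solution of the
   one-step recursion of the urn with boundary value f at stopped states.  If
   every g_j satisfies m g_j(m-1) = (m - s_j) g_j(m), as the falling factorial
   of degree s_j and the multiples of binom(m, s_j) do, then
     (prod_j g_j(m_j)) / binom(mr + c, mr),   c = sum_f a_f s_f / a_r,
   solves the recursion: a type j draw contributes the weight a_j (m_j - s_j),
   a type r draw the weight a_r (mr + c), and these weights add up to the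
   number of balls.  At a stopped state the denominator is 1 or the product
   vanishes.  Falling factorials give the factorial moments; the point
   probabilities follow by binomial inversion,
     [m = k] = sum_l prod_j binom(m_j, l_j) binom(l_j, k_j) (-1)^(l_j - k_j). *)

(* In characteristic 0 its solutions are exactly the multiples of m |-> binom(m, s). *)
Definition bin_shaped {R : pzRingType} (s : nat) (g : nat -> R) :=
  forall m : nat, m%:R * g m.-1 = (m%:R - s%:R) * g m.

Section Falling.
Context {R : comNzRingType}.

Lemma fallingSl (x : R) s : falling x s.+1 = x * falling (x - 1) s.
Proof.
rewrite /falling big_ord_recl /= subr0; congr (_ * _); apply: eq_bigr => i _.
by rewrite /bump /= add1n -addn1 natrD opprD addrA addrAC.
Qed.

Lemma fallingSr (x : R) s : falling x s.+1 = falling x s * (x - s%:R).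
Proof. by rewrite /falling big_ord_recr. Qed.

Lemma falling_bin_shaped s : bin_shaped s (fun m => falling (m%:R : R) s).
Proof.
case=> [|m] /=.
  by rewrite mul0r; case: s => [|s]; rewrite ?subrr ?mul0r // fallingSl mul0r mulr0.
have pred_m : (m.+1)%:R - 1 = m%:R :> R by rewrite -natr1 addrK.
by rewrite -pred_m -fallingSl fallingSr mulrC.
Qed.

Lemma bin_bin_shaped l : bin_shaped l (fun m => 'C(m, l)%:R : R).
Proof.
move=> m; rewrite -natrM mul_bin_down.
have [le_lm|lt_ml] := leqP l m; first by rewrite natrM natrB.
by rewrite bin_small // muln0 mulr0.
Qed.

Lemma bin_shapedMr s (g : nat -> R) c :
  bin_shaped s g -> bin_shaped s (fun m => g m * c).
Proof. by move=> g_shaped m; rewrite !mulrA g_shaped. Qed.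

End Falling.

Lemma mul_bin_shift m k t :
  ('C(m, t + k) * 'C(t + k, k) = 'C(m, k) * 'C(m - k, t))%N.
Proof.
have [le_tkm | lt_m_tk] := leqP (t + k) m; last first.
  rewrite (bin_small lt_m_tk) mul0n.
  have [le_km | lt_mk] := leqP k m; last by rewrite (bin_small lt_mk).
  by rewrite (@bin_small (m - k)) ?muln0 //; lia.
have le_km : (k <= m)%N by apply: leq_trans le_tkm; apply: leq_addl.
have le_t_mk : (t <= m - k)%N by rewrite leq_subRL // addnC.
apply/eqP; rewrite -(@eqn_pmul2r (k`! * t`! * (m - (t + k))`!)); last first.
  by rewrite !muln_gt0 !fact_gt0.
have fact_tk := bin_fact (leq_addl t k); rewrite addnK in fact_tk.
have fact_mk := bin_fact le_t_mk; rewrite -subnDA addnC in fact_mk.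
apply/eqP; transitivity ('C(m, t + k) * ('C(t + k, k) * (k`! * t`!)) * (m - (t + k))`!)%N.
  ring.
by rewrite fact_tk -mulnA (bin_fact le_tkm) -(bin_fact le_km) -fact_mk; ring.
Qed.

Section BinomialInversion.
Context {R : comNzRingType}.

Lemma sum_bin_sign p :
  \sum_(i < p.+1) ('C(p, i)%:R * (-1) ^+ i : R) = (p == 0)%N%:R.
Proof.
have := exprDn (1 : R) (-1) p; rewrite subrr expr0n => ->.
by apply: eq_bigr => i _; rewrite expr1n mul1r mulr_natl.
Qed.

Lemma sum_bin_bin_sign M m k : (m <= M)%N ->
  \sum_(i < M.+1) ('C(m, i)%:R * 'C(i, k)%:R * (-1) ^+ (i - k) : R) = (m == k)%:R.
Proof.
move=> le_mM.
rewrite -(big_mkord xpredT (fun i => 'C(m, i)%:R * 'C(i, k)%:R * (-1) ^+ (i - k))).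
rewrite (big_cat_nat _ (n := m.+1)) //=.
rewrite [X in _ + X]big1_seq ?addr0; last first.
  move=> i /andP[_]; rewrite mem_index_iota => /andP[lt_mi _].
  by rewrite bin_small // !mul0r.
have [lt_mk | le_km] := ltnP m k.
  rewrite (ltn_eqF lt_mk) big1_seq // => i /andP[_].
  rewrite mem_index_iota => /andP[_ le_im].
  by rewrite (@bin_small i) ?mulr0n ?mulr0 ?mul0r // (leq_trans le_im lt_mk).
rewrite (big_cat_nat _ (n := k)) ?(leqW le_km) //= [X in X + _]big1_seq ?add0r; last first.
  move=> i /andP[_]; rewrite mem_index_iota => /andP[_ lt_ik].
  by rewrite (bin_small lt_ik) mulr0 mul0r.
rewrite -{1}[k]add0n big_addn subSn //.
have bin_shift t : 'C(m, t + k)%:R * 'C(t + k, k)%:R * (-1) ^+ (t + k - k)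
    = 'C(m, k)%:R * ('C(m - k, t)%:R * (-1) ^+ t) :> R.
  by rewrite addnK -natrM mul_bin_shift natrM mulrA.
rewrite (eq_bigr _ (fun t _ => bin_shift t)).
rewrite -mulr_sumr big_mkord sum_bin_sign subn_eq0 eqn_leq le_km andbT.
by case: leqP => [le_mk|]; rewrite ?mulr0 // (@anti_leq m k) ?le_mk // binn mulr1.
Qed.

Lemma sum_prod_bin_bin_sign q M (m k : {ffun 'I_q -> nat}) :
    (forall j, m j <= M)%N ->
  \sum_(l : {ffun 'I_q -> 'I_M.+1})
      \prod_j ('C(m j, l j)%:R * 'C(l j, k j)%:R * (-1) ^+ (l j - k j) : R)
  = (m == k)%:R.
Proof.
move=> le_mM; rewrite -(bigA_distr_bigA (fun j (i : 'I_M.+1) =>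
  'C(m j, i)%:R * 'C(i, k j)%:R * (-1) ^+ (i - k j) : R)) /=.
rewrite (eq_bigr (fun j => (m j == k j)%:R)) => [|j _]; last exact: sum_bin_bin_sign.
have [->|neq_mk] := eqVneq m k; first by rewrite big1 // => j _; rewrite eqxx.
have [j neq_j] : exists j, m j != k j.
  apply/existsP; apply: contraNT neq_mk => /existsPn eq_mk.
  by apply/eqP/ffunP => j; apply/eqP/negPn/eq_mk.
by rewrite (bigD1 j) //= (negbTE neq_j) mul0r.
Qed.
End BinomialInversion.

Definition gbinom_add {R : fieldType} (c : R) (p : nat) : R := gbinom (p%:R + c) p.

Section GbinomAdd.
Context {R : numFieldType}.
Implicit Type c : R.

Lemma gbinom_addn0 c : gbinom_add c 0 = 1.
Proof. by rewrite /gbinom_add /gbinom /falling big_ord0 fact0 divr1. Qed.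

Lemma gbinom_addS c p :
  gbinom_add c p.+1 * (p.+1)%:R = ((p.+1)%:R + c) * gbinom_add c p.
Proof.
rewrite /gbinom_add /gbinom fallingSl factS natrM.
have -> : (p.+1)%:R + c - 1 = p%:R + c by rewrite -natr1 addrAC addrK.
have p1_neq0 : (p.+1)%:R != 0 :> R by rewrite pnatr_eq0.
have fact_neq0 : (p`!)%:R != 0 :> R by rewrite pnatr_eq0 -lt0n fact_gt0.
by field; rewrite fact_neq0 addrC natr1.
Qed.

Lemma gbinom_add0n p : gbinom_add (0 : R) p = 1.
Proof.
elim: p => [|p IH]; first exact: gbinom_addn0.
apply: (@mulIf _ (p.+1)%:R); first by rewrite pnatr_eq0.
by rewrite gbinom_addS IH addr0 mulr1 mul1r.
Qed.

Lemma gbinom_add_gt0 p c : 0 <= c -> 0 < gbinom_add c p.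
Proof.
move=> c_ge0; elim: p => [|p IH]; first by rewrite gbinom_addn0.
have p1_gt0 : 0 < (p.+1)%:R :> R by rewrite ltr0n.
rewrite -(pmulr_lgt0 _ p1_gt0) gbinom_addS.
by apply: mulr_gt0 => //; apply: ltr_wpDr.
Qed.

End GbinomAdd.

Lemma bin_shaped_at0 {R : numDomainType} {s} {g : nat -> R} :
  bin_shaped s g -> s != 0%N -> g 0%N = 0.
Proof.
move=> /(_ 0%N) /eqP; rewrite mul0r sub0r mulNr eq_sym oppr_eq0 mulf_eq0 pnatr_eq0.
by case/orP=> [/eqP ->|/eqP].
Qed.

Section Urn.
Variables (R : realFieldType) (q : nat) (a : {ffun 'I_q -> nat}) (ar : nat).
Variables (n : {ffun 'I_q -> nat}) (nr : nat).
Hypotheses (a_gt0 : forall j, (0 < a j)%N) (ar_gt0 : (0 < ar)%N).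
Implicit Types (m : {ffun 'I_q -> nat}) (mr : nat).

Definition am (m : {ffun 'I_q -> nat}) : {ffun 'I_q -> nat} :=
  [ffun j => (a j * m j)%N].

Lemma am_inj : injective am.
Proof.
move=> m m' /ffunP eq_am; apply/ffunP => j.
by apply/eqP; rewrite -(eqn_pmul2l (a_gt0 j)) -!(ffunE (fun j => a j * _)%N) eq_am.
Qed.

Definition dec (m : {ffun 'I_q -> nat}) (j : 'I_q) : {ffun 'I_q -> nat} :=
  [ffun i => if i == j then (m i).-1 else m i].

Lemma urn_stopped_am m mr :
  urn_stopped (am m) (ar * mr) = (mr == 0%N) || [forall j, m j == 0%N].
Proof.
rewrite /urn_stopped muln_eq0 -[ar == 0%N]negbK -lt0n ar_gt0 /=.
by congr (_ || _); apply: eq_forallb => j; rewrite ffunE muln_eq0 eqn0Ngt a_gt0.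
Qed.

Lemma urn_running_gt0 {m mr} : ~~ urn_stopped (am m) (ar * mr) -> (0 < mr)%N.
Proof. by rewrite urn_stopped_am lt0n => /norP[]. Qed.

Lemma am_dec m j :
  [ffun i => if i == j then (am m i - a i)%N else am m i] = am (dec m j).
Proof.
by apply/ffunP => i; rewrite !ffunE; case: eqP => // _; rewrite -subn1 mulnBr muln1.
Qed.

Lemma sum_dec m j : (0 < m j)%N -> (\sum_i dec m j i).+1 = \sum_i m i.
Proof.
move=> m_gt0; rewrite (bigD1 j) //= [RHS](bigD1 j) //= ffunE eqxx -addSn prednK //.
by congr (_ + _)%N; apply: eq_bigr => i /negbTE neq_ij; rewrite ffunE neq_ij.
Qed.

Definition urn_step (F : {ffun 'I_q -> nat} -> nat -> R) m mr : R :=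
  let total := (\sum_i am m i + ar * mr)%N%:R in
  \sum_j ((am m j)%:R / total) * F (dec m j) mr + ((ar * mr)%N%:R / total) * F m mr.-1.

Lemma urn_step_sum (I : finType) (P : pred I) F m mr :
  urn_step (fun m' mr' => \sum_(l | P l) F l m' mr') m mr
  = \sum_(l | P l) urn_step (F l) m mr.
Proof.
rewrite /urn_step big_split /= mulr_sumr; congr (_ + _).
by rewrite exchange_big; apply: eq_bigr => j _; rewrite mulr_sumr.
Qed.

Lemma urn_expect_solution f F :
    (forall m mr, (forall j, m j <= n j)%N -> urn_stopped (am m) (ar * mr) ->
       F m mr = f (am m)) ->
    (forall m mr, (forall j, m j <= n j)%N -> ~~ urn_stopped (am m) (ar * mr) ->
       F m mr = urn_step F m mr) ->
  forall fuel m mr, (forall j, m j <= n j)%N -> (\sum_j m j + mr <= fuel)%N ->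
    urn_expect a ar fuel (am m) (ar * mr) f = F m mr.
Proof.
move=> F_stopped F_step; elim=> [|fuel IH] m mr le_mn le_fuel /=.
  move: le_fuel; rewrite leqn0 addn_eq0 => /andP[_ /eqP->].
  by rewrite urn_stopped_am eqxx F_stopped // urn_stopped_am eqxx.
have [stopped|running] := boolP (urn_stopped (am m) (ar * mr)).
  exact/esym/F_stopped.
have mr_gt0 := urn_running_gt0 running.
rewrite (F_step m mr le_mn running) /urn_step; congr (_ + _).
  apply: eq_bigr => j _; rewrite am_dec.
  have [m_j0|m_gt0] := posnP (m j); first by rewrite ffunE m_j0 muln0 !mul0r.
  congr (_ * _); apply: IH.
    move=> i; rewrite ffunE; case: eqP => _; last exact: le_mn.
    exact: leq_trans (leq_pred _) (le_mn i).
  by rewrite -ltnS -addSn sum_dec.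
have -> : (ar * mr - ar = ar * mr.-1)%N by rewrite -subn1 mulnBr muln1.
rewrite IH //; lia.
Qed.

Definition stop_shift (s : 'I_q -> nat) : R := \sum_f (a f * s f)%:R / ar%:R.

Lemma stop_shift_ge0 s : 0 <= stop_shift s.
Proof. by apply: sumr_ge0 => f _; apply: divr_ge0. Qed.

Lemma stop_shiftE s : stop_shift s * ar%:R = \sum_f (a f)%:R * (s f)%:R.
Proof.
have ar_neq0 : ar%:R != 0 :> R by rewrite pnatr_eq0 -lt0n.
by rewrite mulr_suml; apply: eq_bigr => f _; rewrite divfK // natrM.
Qed.

Definition urn_term (g : 'I_q -> nat -> R) s m mr : R :=
  (\prod_j g j (m j)) / gbinom_add (stop_shift s) mr.

Section UrnTerm.
Variables (g : 'I_q -> nat -> R) (s : 'I_q -> nat).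
Hypothesis g_shaped : forall j, bin_shaped (s j) (g j).

Lemma prod_dec m j :
  (am m j)%:R * \prod_i g i (dec m j i)
  = (a j)%:R * ((m j)%:R - (s j)%:R) * \prod_i g i (m i).
Proof.
rewrite (bigD1 j) //= [in RHS](bigD1 j) //= !ffunE eqxx natrM.
rewrite (eq_bigr (fun i => g i (m i))) => [|i /negbTE neq_ij]; last by rewrite ffunE neq_ij.
by rewrite -mulrA (mulrA (m j)%:R) g_shaped !mulrA.
Qed.

Lemma urn_term_stopped m mr :
  urn_stopped (am m) (ar * mr) -> urn_term g s m mr = \prod_j g j (m j).
Proof.
rewrite /urn_term urn_stopped_am => /orP[/eqP-> | /forallP m_eq0].
  by rewrite gbinom_addn0 divr1.
have [s_eq0|/forallPn[j s_neq0]] := boolP [forall j, s j == 0%N].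
  suff -> : stop_shift s = 0 by rewrite gbinom_add0n divr1.
  by rewrite /stop_shift big1 // => f _; rewrite (eqP (forallP s_eq0 f)) muln0 mul0r.
by rewrite (bigD1 j) //= (eqP (m_eq0 j)) (bin_shaped_at0 (g_shaped j)) // !mul0r.
Qed.

Lemma urn_term_step m mr :
  (0 < mr)%N -> urn_term g s m mr = urn_step (urn_term g s) m mr.
Proof.
case: mr => // p _; rewrite /urn_step /urn_term /=.
set P := \prod_j g j (m j); set total := (_ + _)%N%:R.
set c := stop_shift s; set G := gbinom_add c p.+1.
have c_ge0 : 0 <= c := stop_shift_ge0 s.
have G_gt0 : 0 < G by apply: gbinom_add_gt0.
have p1_gt0 : 0 < (p.+1)%:R :> R by rewrite ltr0n.
have total_gt0 : 0 < total by rewrite ltr0n addn_gt0 orbC muln_gt0 ar_gt0.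
have G_pred : gbinom_add c p = G * (p.+1)%:R / ((p.+1)%:R + c).
  by rewrite /G gbinom_addS [_ * gbinom_add c p]mulrC mulfK // gt_eqF // ltr_wpDr.
have draw j : (am m j)%:R / total * (\prod_i g i (dec m j i) / G)
    = (a j)%:R * ((m j)%:R - (s j)%:R) * (P / (total * G)).
  by rewrite mulrACA prod_dec [(total * G)^-1]invfM !mulrA.
rewrite (eq_bigr _ (fun j _ => draw j)) -mulr_suml G_pred.
have total_split : \sum_j (a j)%:R * ((m j)%:R - (s j)%:R) + ar%:R * ((p.+1)%:R + c)
    = total.
  rewrite mulrDr [ar%:R * c]mulrC stop_shiftE addrCA -big_split addrC /=.
  rewrite /total natrD natr_sum natrM; congr (_ + _).
  by apply: eq_bigr => j _; rewrite ffunE natrM -mulrDr subrK.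
rewrite natrM (_ : \sum_j _ = total - ar%:R * ((p.+1)%:R + c)); last first.
  by rewrite -total_split addrK.
have : (p.+1)%:R + c != 0 by rewrite gt_eqF // ltr_wpDr.
move: (gt_eqF G_gt0) (gt_eqF p1_gt0) (gt_eqF total_gt0).
set p1 := (p.+1)%:R => G_neq0 p1_neq0 total_neq0 p1c_neq0.
clearbody p1 total G c P.
by field; rewrite G_neq0 p1_neq0 total_neq0 p1c_neq0.
Qed.

End UrnTerm.

Lemma urn_E_solution (f : {ffun 'I_q -> nat} -> R) F :
    (forall m mr, (forall j, m j <= n j)%N -> urn_stopped (am m) (ar * mr) ->
       F m mr = f (am m)) ->
    (forall m mr, (forall j, m j <= n j)%N -> ~~ urn_stopped (am m) (ar * mr) ->
       F m mr = urn_step F m mr) ->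
  urn_E a ar n nr f = F n nr.
Proof.
move=> F_stopped F_step.
rewrite /urn_E -/(am n) (urn_expect_solution _ _ F_stopped F_step) //.
apply: leq_add; last exact: leq_pmull.
by apply: leq_sum => j _; apply: leq_pmull.
Qed.

Lemma urn_E_falling (s : {ffun 'I_q -> nat}) :
  urn_E a ar n nr (fun x => \prod_j falling ((x j)%:R / (a j)%:R : R) (s j))
  = (\prod_j falling ((n j)%:R : R) (s j))
      / gbinom (nr%:R + \sum_f (a f * s f)%:R / ar%:R) nr.
Proof.
have shaped j : bin_shaped (s j) (fun i => falling (i%:R : R) (s j)).
  exact: falling_bin_shaped.
apply: (urn_E_solution _ (urn_term (fun j i => falling i%:R (s j)) s)).
  move=> m mr _ stopped; rewrite urn_term_stopped //; apply: eq_bigr => j _.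
  by rewrite ffunE natrM mulrAC divff ?mul1r // pnatr_eq0 -lt0n.
by move=> m mr _ /urn_running_gt0 mr_gt0; rewrite -urn_term_step.
Qed.

Lemma urn_P_formula (k : {ffun 'I_q -> nat}) : (forall j, k j <= n j)%N ->
  urn_P (R := R) a ar n nr [ffun j => (a j * k j)%N] =
  \sum_(l : {ffun 'I_q -> 'I_(\max_(j < q) n j).+1}
         | [forall j, (k j <= l j <= n j)%N])
     (\prod_j ('C(n j, l j)%:R * 'C(l j, k j)%:R * (-1) ^+ (l j - k j)%N))
     / gbinom (nr%:R + \sum_f (a f * l f)%:R / ar%:R) nr.
Proof.
move=> le_kn; rewrite /urn_P; set M := \max_(j < q) n j.
pose g (l : {ffun 'I_q -> 'I_M.+1}) j i : R :=
  'C(i, l j)%:R * 'C(l j, k j)%:R * (-1) ^+ (l j - k j).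
have shaped (l : {ffun 'I_q -> 'I_M.+1}) j : bin_shaped (l j) (g l j).
  by do 2!apply: bin_shapedMr; apply: bin_bin_shaped.
apply: (urn_E_solution _ (fun m mr =>
  \sum_(l : {ffun 'I_q -> 'I_M.+1} | [forall j, (k j <= l j <= n j)%N])
    urn_term (g l) (fun j => l j) m mr)) => m mr le_mn; last first.
  move=> /urn_running_gt0 mr_gt0; rewrite urn_step_sum; apply: eq_bigr => l _.
  exact: urn_term_step.
move=> stopped; rewrite -/(am k) (inj_eq am_inj).
rewrite (eq_bigr _ (fun l _ => urn_term_stopped _ _ (shaped l) _ _ stopped)) big_mkcond /=.
rewrite -(@sum_prod_bin_bin_sign _ _ M) => [|j]; last first.
  by apply: leq_trans (le_mn j) _; apply: leq_bigmax.
apply: eq_bigr => l _; case: ifP => // /forallPn[j].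
rewrite negb_and -!ltnNge => /orP[lt_lk|lt_nl]; rewrite (bigD1 j) //=.
  by rewrite (bin_small lt_lk) mulr0 !mul0r.
by rewrite (bin_small (leq_ltn_trans (le_mn j) lt_nl)) !mul0r.
Qed.
End Urn.

Theorem corollary4 (R : realFieldType) (q : nat) (hq : (1 <= q)%N)
    (a : {ffun 'I_q -> nat}) (ar : nat) (n : {ffun 'I_q -> nat}) (nr : nat)
    (ha : forall j, (1 <= a j)%N) (har : (1 <= ar)%N)
    (hn : forall j, (1 <= n j)%N) (hnr : (1 <= nr)%N) :
  (forall k : {ffun 'I_q -> nat}, (forall j, (k j <= n j)%N) ->
     urn_P (R := R) a ar n nr [ffun j => (a j * k j)%N] =
     \sum_(l : {ffun 'I_q -> 'I_(\max_(j < q) n j).+1}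
             | [forall j, (k j <= l j <= n j)%N])
        (\prod_(j < q) (('C(n j, l j))%:R * ('C(l j, k j))%:R
                          * (-1) ^+ (l j - k j)%N))
        / gbinom (nr%:R + \sum_(f < q) (a f * l f)%:R / ar%:R) nr)
  /\
  (forall s : {ffun 'I_q -> nat},
     urn_E a ar n nr
       (fun x => \prod_(j < q) falling ((x j)%:R / (a j)%:R : R) (s j)) =
     (\prod_(j < q) falling ((n j)%:R : R) (s j))
       / gbinom (nr%:R + \sum_(f < q) (a f * s f)%:R / ar%:R) nr).
Proof.
split=> [k le_kn | s]; first exact: urn_P_formula.
exact: urn_E_falling.
Qed.
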